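(* Fix $\alpha\in[\tfrac12,1)$. After any sequence of insert, delete and get operations (with counter-based rebuilding), a SAIT storing $n$ keys with total number of accesses $m$ uses $O(m^{\alpha}\cdot n)$ memory.
   Context: A Generic Self-Adjusting Tree (GSAT) with degree function $D$ for a set of integer keys with access counts $ac_i\ge1$ consists of $m=\sum_i ac_i$, an array of $k\le\lceil D(m)\rceil$ representative keys with their access counts, and $k+1$ child subtrees that are GSATs for the keys lying strictly before the first representative, strictly between consecutive representatives, and strictly after the last; every node stores at least one key. A GSAT is ideal if each child $T_j$ of the root satisfies $m(T_j)\le m/(D(m)+1)$, where $m(T_j)$ is the total access count of keys in $T_j$, and each child is ideal. A SAIT is a GSAT with $D(m)=\sqrt m$ in which each node whose subtree has total access count $m'$ at the time of its construction stores an interpolation array $ID$ of size $\lceil m'^{\alpha}\rceil$ and otherwise $O(D(m'))$ data. Dynamic operations: each node $v$ has a counter $C(v)$ and $im(T_v)$, the value of $m(T_v)$ at the last (re)build of $T_v$; an operation on key $x$ walks the search path, increments counters of visited nodes and the access count of $x$ (insert of an absent key adds a new constant-size node holding $x$ with count 1, delete only marks the key); then the shallowest visited $u$ with $C(u)>im(T_u)/4$ (if any) has $T_u$ rebuilt into an ideal SAIT of its unmarked keys, resetting counters to $0$ and $im$ values. *)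

From Stdlib Require Import Reals ZArith Arith List Sorting.Sorted.
Import ListNotations.
Open Scope R_scope.

(** A stored key with its access count and its deletion mark. *)
Record entry : Type := mkEntry { ekey : Z; ecnt : nat; emark : bool }.

(** A (possibly empty) GSAT.  [Node reps children C im]:
    - [reps]     : the array of representative keys (with counts and marks),
    - [children] : the k+1 child subtrees ([Leaf] = empty subtree),
    - [C]        : the counter C(v),
    - [im]       : im(T_v), the value of m(T_v) at the last (re)build of T_v;
                   it is also the total access count m' of the subtree at the
                   time the node was constructed. *)
Inductive tree : Type :=
| Leaf : tree
| Node : list entry -> list tree -> nat -> nat -> tree.

Fixpoint inorder (t : tree) : list entry :=
  match t with
  | Leaf => []
  | Node reps ch _ _ =>
      (fix go (rs : list entry) (cs : list tree) {struct cs} : list entry :=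
         match cs with
         | [] => []
         | c :: cs' => inorder c ++
             match rs with
             | [] => []
             | r :: rs' => r :: go rs' cs'
             end
         end) reps ch
  end.

Definition mtot (t : tree) : nat := fold_right (fun e s => (ecnt e + s)%nat) 0%nat (inorder t).

(** n: number of keys stored in T (marked keys are still stored). *)
Definition nkeys (t : tree) : nat := length (inorder t).

Definition ceilZ (x : R) : Z := (- Int_part (- x))%Z.

Definition D (m : nat) : R := sqrt (INR m).

(** Memory of one node built when its subtree had total access count m':
    interpolation array of size ceil(m'^alpha) plus O(D(m')) further data,
    taken as ceil(D(m')) + 1 words. *)
Definition node_mem (alpha : R) (m' : nat) : R :=
  IZR (ceilZ (Rpower (INR m') alpha)) + IZR (ceilZ (D m')) + 1.

Fixpoint mem (alpha : R) (t : tree) : R :=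
  match t with
  | Leaf => 0
  | Node _ ch _ im =>
      node_mem alpha im +
      (fix go (cs : list tree) : R :=
         match cs with
         | [] => 0
         | c :: cs' => mem alpha c + go cs'
         end) ch
  end.

Fixpoint ideal (t : tree) : Prop :=
  match t with
  | Leaf => True
  | Node reps ch c im =>
      reps <> [] /\
      length ch = S (length reps) /\
      IZR (Z.of_nat (length reps)) <= IZR (ceilZ (D (mtot t))) /\
      c = 0%nat /\ im = mtot t /\
      (fix go (cs : list tree) : Prop :=
         match cs with
         | [] => True
         | c' :: cs' =>
             (INR (mtot c') <= INR (mtot t) / (D (mtot t) + 1) /\ ideal c') /\ go cs'
         end) ch
  end.

Definition ideal_of (l : list entry) (t : tree) : Prop :=
  ideal t /\ inorder t = l.

Definition unmarked (l : list entry) : list entry :=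
  filter (fun e => negb (emark e)) l.

Inductive op : Type := Ins (x : Z) | Del (x : Z) | Get (x : Z).

Definition op_key (o : op) : Z := match o with Ins x | Del x | Get x => x end.

Definition touch (o : op) (e : entry) : entry :=
  if Z.eqb (ekey e) (op_key o) then
    match o with
    | Ins _ => mkEntry (ekey e) (S (ecnt e)) false
    | Del _ => mkEntry (ekey e) (S (ecnt e)) true
    | Get _ => mkEntry (ekey e) (S (ecnt e)) (emark e)
    end
  else e.

Definition found_in (x : Z) (reps : list entry) : bool :=
  existsb (fun e => Z.eqb (ekey e) x) reps.

Definition child_index (x : Z) (reps : list entry) : nat :=
  length (filter (fun e => Z.ltb (ekey e) x) reps).

Fixpoint replace_nth {A} (j : nat) (a : A) (l : list A) : list A :=
  match l, j with
  | [], _ => []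
  | _ :: l', O => a :: l'
  | b :: l', S j' => b :: replace_nth j' a l'
  end.

Fixpoint acc (o : op) (t : tree) : tree :=
  match t with
  | Leaf =>
      match o with
      | Ins x => Node [mkEntry x 1 false] [Leaf; Leaf] 0 1
      | _ => Leaf
      end
  | Node reps ch c im =>
      if found_in (op_key o) reps then Node (map (touch o) reps) ch (S c) im
      else
        let j := child_index (op_key o) reps in
        Node reps
          ((fix go (i : nat) (cs : list tree) {struct cs} : list tree :=
              match cs with
              | [] => []
              | c0 :: cs' => (if Nat.eqb i j then acc o c0 else c0) :: go (S i) cs'
              end) 0%nat ch)
          (S c) im
  end.

(** One full operation: access phase, then the shallowest visited node u with
    C(u) > im(T_u)/4 (after incrementing) has T_u rebuilt into an (arbitrary)
    ideal SAIT of its unmarked keys. *)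
Inductive step (o : op) : tree -> tree -> Prop :=
| step_leaf : step o Leaf (acc o Leaf)
| step_rebuild : forall reps ch c im t',
    (im < 4 * S c)%nat ->
    ideal_of (unmarked (inorder (acc o (Node reps ch c im)))) t' ->
    step o (Node reps ch c im) t'
| step_found : forall reps ch c im,
    (4 * S c <= im)%nat ->
    found_in (op_key o) reps = true ->
    step o (Node reps ch c im) (acc o (Node reps ch c im))
| step_descend : forall reps ch c im cj',
    (4 * S c <= im)%nat ->
    found_in (op_key o) reps = false ->
    step o (nth (child_index (op_key o) reps) ch Leaf) cj' ->
    step o (Node reps ch c im)
      (Node reps (replace_nth (child_index (op_key o) reps) cj' ch) (S c) im).

Definition valid_keys (l : list entry) : Prop :=
  Sorted (fun a b => (ekey a < ekey b)%Z) l /\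
  Forall (fun e => (1 <= ecnt e)%nat /\ emark e = false) l.

Inductive reachable : tree -> Prop :=
| reach_init : forall l t, valid_keys l -> ideal_of l t -> reachable t
| reach_step : forall o t t', reachable t -> step o t t' -> reachable t'.

(** The proof never looks at the counters: the bound holds whatever the
    rebuilding schedule.  The key observation is a purely LOCAL invariant
    [bounded]: at every node with k representatives of total count r,
    the value im recorded at construction satisfies  im <= 2 r + 9 k^2.
    - A node created by an insertion has im = 1 <= 2 r.
    - The access phase only increases counts (hence r) and never changes im.
    - A freshly rebuilt ideal node has im = m, and its k+1 children each hold
      at most m/(sqrt m + 1), which forces m <= 2 r + 9 k^2
      ([rebuild_size_bound]).
    Given the invariant, a node costs ceil(im^alpha) + ceil(sqrt im) + 1 words,
    and for im <= 2 r + 9 k^2, k <= r <= M (M = m(T)) and 1/2 <= alpha < 1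
    this is at most 39 k M^alpha ([node_mem_bound]).  Summing over the nodes,
    whose representative sets partition the n stored keys, gives
    mem(T) <= 39 m^alpha n. *)

From Stdlib Require Import Reals Lra Lia Psatz List Permutation.
Import ListNotations.
Open Scope R_scope.

Lemma ceilZ_le (x : R) : IZR (ceilZ x) <= x + 1.
Proof.
  unfold ceilZ. destruct (base_Int_part (- x)) as [Hlo Hhi].
  rewrite opp_IZR. lra.
Qed.

(** [Rpower] is [exp (a * ln x)] and [ln 0 = 0], so [0 ^ a = 1]. *)
Lemma Rpower_0_l (a : R) : Rpower 0 a = 1.
Proof.
  unfold Rpower, ln. destruct (Rlt_dec 0 0) as [H|_].
  - exfalso; exact (Rlt_irrefl 0 H).
  - now rewrite Rmult_0_r, exp_0.
Qed.

Lemma Rpower_pos (x a : R) : 0 < Rpower x a.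
Proof. apply exp_pos. Qed.

Lemma Rpower_ge_1 (x a : R) : 1 <= x -> 0 <= a -> 1 <= Rpower x a.
Proof.
  intros Hx Ha. rewrite <- (Rpower_O x) by lra. apply Rle_Rpower; lra.
Qed.

Lemma Rpower_const_le (c a : R) : 1 <= c -> a <= 1 -> Rpower c a <= c.
Proof.
  intros Hc Ha. rewrite <- (Rpower_1 c) at 2 by lra. apply Rle_Rpower; lra.
Qed.

Lemma Rpower_scale_le (c x a : R) :
  1 <= c -> 0 < x -> 0 <= a <= 1 -> Rpower (c * x) a <= c * Rpower x a.
Proof.
  intros Hc Hx Ha. rewrite <- Rpower_mult_distr by lra.
  pose proof (Rpower_const_le c a Hc (proj2 Ha)).
  pose proof (Rpower_pos x a). nra.
Qed.

(** The O(D(m')) part of a node is dominated by its interpolation array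
    when alpha >= 1/2. *)
Lemma sqrt_le_Rpower (x a : R) : 1 <= x -> 1/2 <= a -> sqrt x <= Rpower x a.
Proof.
  intros Hx Ha. rewrite <- Rpower_sqrt by lra. apply Rle_Rpower; lra.
Qed.

(** (k^2)^a = k * k^(2a-1) <= k * M^a, using 2a - 1 <= a and k <= M. *)
Lemma Rpower_square_le (k M a : R) :
  1 <= k <= M -> 1/2 <= a <= 1 -> Rpower (k * k) a <= k * Rpower M a.
Proof.
  intros Hk Ha.
  replace (k * k) with (Rpower k (INR 2)) by (rewrite Rpower_pow by lra; simpl; ring).
  rewrite Rpower_mult.
  replace (INR 2 * a) with (1 + (2 * a - 1)) by (simpl; ring).
  rewrite Rpower_plus, Rpower_1 by lra.
  apply Rmult_le_compat_l; [lra|].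
  apply Rle_trans with (Rpower M (2 * a - 1)).
  - apply Rle_Rpower_l; lra.
  - apply Rle_Rpower; lra.
Qed.

Lemma node_mem_le (alpha : R) (im : nat) :
  1/2 <= alpha -> node_mem alpha im <= 2 * Rpower (INR im) alpha + 3.
Proof.
  intros Ha. unfold node_mem, D.
  pose proof (ceilZ_le (Rpower (INR im) alpha)).
  pose proof (ceilZ_le (sqrt (INR im))).
  destruct im as [|im].
  - simpl INR in *. rewrite Rpower_0_l, sqrt_0 in *. lra.
  - pose proof (sqrt_le_Rpower (INR (S im)) alpha) as Hs.
    assert (1 <= INR (S im)) by (rewrite S_INR; pose proof (pos_INR im); lra).
    specialize (Hs ltac:(lra) Ha). lra.
Qed.

(** If m <= 2 r + 9 k^2 with 1 <= k <= r <= M, then m^alpha <= 18 k M^alpha: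
    either m <= 4 M, or 2 r < m/2 and then m <= 18 k^2. *)
Lemma size_power_le (alpha k r M m : R) :
  1/2 <= alpha <= 1 -> 1 <= k <= r -> r <= M -> 0 <= m <= 2 * r + 9 * (k * k) ->
  Rpower m alpha <= 18 * k * Rpower M alpha.
Proof.
  intros Ha Hk HM Hm.
  assert (HMa : 1 <= Rpower M alpha) by (apply Rpower_ge_1; lra).
  destruct (Req_dec m 0) as [->|Hm0]; [rewrite Rpower_0_l; nra|].
  destruct (Rle_dec m (4 * M)) as [Hsmall|Hlarge].
  - apply Rle_trans with (Rpower (4 * M) alpha); [apply Rle_Rpower_l; lra|].
    pose proof (Rpower_scale_le 4 M alpha). nra.
  - apply Rle_trans with (Rpower (18 * (k * k)) alpha); [apply Rle_Rpower_l; nra|].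
    pose proof (Rpower_scale_le 18 (k * k) alpha).
    pose proof (Rpower_square_le k M alpha). nra.
Qed.

Lemma node_mem_bound (alpha : R) (im k r M : nat) :
  1/2 <= alpha < 1 -> (1 <= k <= r)%nat -> (r <= M)%nat ->
  (im <= 2 * r + 9 * k * k)%nat ->
  node_mem alpha im <= 39 * Rpower (INR M) alpha * INR k.
Proof.
  intros Ha Hkr HrM Him.
  apply le_INR in HrM. apply le_INR in Him.
  assert (1 <= INR k <= INR r) by (split; [apply (le_INR 1)|apply le_INR]; lia).
  rewrite plus_INR, !mult_INR in Him. simpl INR in Him.
  pose proof (size_power_le alpha (INR k) (INR r) (INR M) (INR im)) as Hp.
  specialize (Hp ltac:(lra) ltac:(lra) HrM ltac:(split; [apply pos_INR|lra])).
  pose proof (node_mem_le alpha im ltac:(lra)).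
  assert (1 <= Rpower (INR M) alpha) by (apply Rpower_ge_1; lra).
  nra.
Qed.

(** At an ideal node with r = count of the representatives and S = count of the
    children, each of the k+1 children holds at most m/(sqrt m + 1), m = r + S.
    If sqrt m + 1 >= 2(k+1) the children hold at most m/2, so m <= 2r;
    otherwise sqrt m < 2k + 1 and m <= 9k^2. *)
Lemma rebuild_size_bound (r S k : R) :
  0 <= r -> 0 <= S -> 1 <= k ->
  S <= (k + 1) * ((r + S) / (sqrt (r + S) + 1)) ->
  r + S <= 2 * r + 9 * (k * k).
Proof.
  intros Hr HS Hk Hch.
  set (s := sqrt (r + S)) in *.
  assert (Hs0 : 0 <= s) by apply sqrt_pos.
  assert (Hss : s * s = r + S) by (apply sqrt_sqrt; lra).
  set (q := (r + S) / (s + 1)) in *.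
  assert (Hq : q * (s + 1) = r + S) by (unfold q; field; lra).
  assert (Hq0 : 0 <= q)
    by (unfold q; apply Rmult_le_pos; [lra | left; apply Rinv_0_lt_compat; lra]).
  destruct (Rle_dec (2 * (k + 1)) (s + 1)); nra.
Qed.

Fixpoint interleave (rs : list entry) (cs : list tree) {struct cs} : list entry :=
  match cs with
  | [] => []
  | c :: cs' => inorder c ++
      match rs with
      | [] => []
      | r :: rs' => r :: interleave rs' cs'
      end
  end.

Lemma inorder_Node (reps : list entry) (ch : list tree) (c im : nat) :
  inorder (Node reps ch c im) = interleave reps ch.
Proof. reflexivity. Qed.

Lemma interleave_perm (rs : list entry) (cs : list tree) :
  length cs = S (length rs) ->
  Permutation (interleave rs cs) (rs ++ flat_map inorder cs).
Proof.
  revert cs; induction rs as [|r rs IH]; intros [|c cs] Hlen; simpl in Hlen; try lia.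
  - destruct cs; simpl in Hlen; [|lia]. simpl. now rewrite !app_nil_r.
  - cbn [interleave flat_map app]. rewrite IH by lia.
    symmetry. apply Permutation_cons_app.
    rewrite !app_assoc. apply Permutation_app_tail, Permutation_app_comm.
Qed.

Definition count_sum (l : list entry) : nat :=
  fold_right (fun e s => (ecnt e + s)%nat) 0%nat l.

Lemma count_sum_app (l l' : list entry) :
  count_sum (l ++ l') = (count_sum l + count_sum l')%nat.
Proof. induction l; simpl; lia. Qed.

Lemma count_sum_perm (l l' : list entry) : Permutation l l' -> count_sum l = count_sum l'.
Proof. induction 1; simpl; lia. Qed.

Lemma mtot_Node (reps : list entry) (ch : list tree) (c im : nat) :
  length ch = S (length reps) ->
  mtot (Node reps ch c im) = (count_sum reps + count_sum (flat_map inorder ch))%nat.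
Proof.
  intros Hlen. change (mtot _) with (count_sum (interleave reps ch)).
  now rewrite (count_sum_perm _ _ (interleave_perm reps ch Hlen)), count_sum_app.
Qed.

Lemma nkeys_Node (reps : list entry) (ch : list tree) (c im : nat) :
  length ch = S (length reps) ->
  nkeys (Node reps ch c im) = (length reps + length (flat_map inorder ch))%nat.
Proof.
  intros Hlen. unfold nkeys. rewrite inorder_Node.
  now rewrite (Permutation_length (interleave_perm reps ch Hlen)), length_app.
Qed.

Lemma mtot_child_le (c : tree) (cs : list tree) :
  In c cs -> (mtot c <= count_sum (flat_map inorder cs))%nat.
Proof.
  induction cs as [|c' cs IH]; intros Hin; [destruct Hin|].
  simpl flat_map. rewrite count_sum_app. destruct Hin as [->|Hin].
  - unfold mtot; fold (count_sum (inorder c)); lia.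
  - specialize (IH Hin). lia.
Qed.

Lemma children_count_le (X : R) (cs : list tree) :
  Forall (fun c => INR (mtot c) <= X) cs ->
  INR (count_sum (flat_map inorder cs)) <= INR (length cs) * X.
Proof.
  induction 1 as [|c cs Hc _ IH]; [simpl; lra|].
  simpl flat_map. rewrite count_sum_app, plus_INR. cbn [length]. rewrite S_INR.
  change (count_sum (inorder c)) with (mtot c). lra.
Qed.

Lemma mem_Node (alpha : R) (reps : list entry) (ch : list tree) (c im : nat) :
  mem alpha (Node reps ch c im) =
  node_mem alpha im + fold_right (fun c s => mem alpha c + s) 0 ch.
Proof. reflexivity. Qed.

Lemma ideal_Node (reps : list entry) (ch : list tree) (c im : nat) :
  ideal (Node reps ch c im) ->
  let m := mtot (Node reps ch c im) in
  reps <> [] /\ length ch = S (length reps) /\ im = m /\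
  Forall (fun c' => INR (mtot c') <= INR m / (D m + 1) /\ ideal c') ch.
Proof.
  intros (Hne & Hlen & _ & _ & Him & Hch) m. fold m in Him, Hch.
  repeat split; auto. clearbody m. clear - Hch.
  induction ch as [|c' ch IH]; constructor; [apply Hch | apply IH, Hch].
Qed.

Section AccessChildren.
Variables (o : op) (j : nat).
Fixpoint acc_children (i : nat) (cs : list tree) : list tree :=
  match cs with
  | [] => []
  | c :: cs' => (if Nat.eqb i j then acc o c else c) :: acc_children (S i) cs'
  end.
End AccessChildren.

Lemma acc_Node (o : op) (reps : list entry) (ch : list tree) (c im : nat) :
  acc o (Node reps ch c im) =
  if found_in (op_key o) reps then Node (map (touch o) reps) ch (S c) im
  else Node reps (acc_children o (child_index (op_key o) reps) 0 ch) (S c) im.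
Proof. reflexivity. Qed.

Fixpoint tree_ind_nested (P : tree -> Prop) (HLeaf : P Leaf)
  (HNode : forall reps ch c im, Forall P ch -> P (Node reps ch c im)) (t : tree) : P t :=
  match t with
  | Leaf => HLeaf
  | Node reps ch c im => HNode reps ch c im
      ((fix all_children (l : list tree) : Forall P l :=
          match l with
          | [] => Forall_nil _
          | x :: l' => Forall_cons _ (tree_ind_nested P HLeaf HNode x) (all_children l')
          end) ch)
  end.

Definition positive_counts (l : list entry) : Prop :=
  Forall (fun e => (1 <= ecnt e)%nat) l.

Lemma length_le_count_sum (l : list entry) :
  positive_counts l -> (length l <= count_sum l)%nat.
Proof. induction 1; simpl; lia. Qed.

Inductive bounded : tree -> Prop :=
| bounded_Leaf : bounded Leaf
| bounded_Node : forall reps ch c im,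
    reps <> [] -> length ch = S (length reps) -> positive_counts reps ->
    (im <= 2 * count_sum reps + 9 * length reps * length reps)%nat ->
    Forall bounded ch -> bounded (Node reps ch c im).

Lemma positive_counts_Node (reps : list entry) (ch : list tree) (c im : nat) :
  length ch = S (length reps) ->
  positive_counts (inorder (Node reps ch c im)) <->
  positive_counts reps /\ Forall (fun c => positive_counts (inorder c)) ch.
Proof.
  intros Hlen. unfold positive_counts. rewrite inorder_Node.
  split.
  - intros H. apply (Permutation_Forall (interleave_perm reps ch Hlen)), Forall_app in H.
    now rewrite Forall_flat_map in H.
  - intros [Hr Hc].
    apply (Permutation_Forall (Permutation_sym (interleave_perm reps ch Hlen))).
    apply Forall_app. now rewrite Forall_flat_map.
Qed.

Lemma bounded_positive_counts (t : tree) : bounded t -> positive_counts (inorder t).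
Proof.
  induction t as [|reps ch c im IH] using tree_ind_nested; intros Hb; [constructor|].
  inversion Hb as [|? ? ? ? _ Hlen Hr _ Hch]; subst.
  apply positive_counts_Node; auto. split; auto.
  rewrite Forall_forall in *. intros c' Hc'. apply IH, Hch; exact Hc'.
Qed.

Lemma touch_count (o : op) (e : entry) : (ecnt e <= ecnt (touch o e))%nat.
Proof. unfold touch. destruct (Z.eqb _ _); [destruct o|]; simpl; lia. Qed.

Lemma count_sum_map_touch (o : op) (l : list entry) :
  (count_sum l <= count_sum (map (touch o) l))%nat.
Proof. induction l as [|e l IH]; simpl; [lia|]. pose proof (touch_count o e). lia. Qed.

Lemma acc_children_length (o : op) (j i : nat) (cs : list tree) :
  length (acc_children o j i cs) = length cs.
Proof. revert i; induction cs; intros i; simpl; auto. Qed.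

Lemma acc_children_bounded (o : op) (j i : nat) (cs : list tree) :
  Forall (fun c => bounded c -> bounded (acc o c)) cs -> Forall bounded cs ->
  Forall bounded (acc_children o j i cs).
Proof.
  revert i; induction cs as [|c cs IH]; intros i Hacc Hb; simpl; [constructor|].
  inversion Hacc; inversion Hb; subst. constructor; auto.
  destruct (Nat.eqb i j); auto.
Qed.

(** The access phase preserves the invariant: im is unchanged and r can only grow;
    a node created by an insertion has im = 1. *)
Lemma bounded_acc (o : op) (t : tree) : bounded t -> bounded (acc o t).
Proof.
  induction t as [|reps ch c im IH] using tree_ind_nested; intros Hb.
  - destruct o; simpl; repeat constructor; discriminate.
  - inversion Hb as [|? ? ? ? Hne Hlen Hr Him Hch]; subst. rewrite acc_Node.
    destruct (found_in _ _); constructor; auto.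
    + destruct reps; [contradiction|discriminate].
    + now rewrite length_map.
    + apply Forall_map. eapply Forall_impl; [|exact Hr].
      intros e He. pose proof (touch_count o e). simpl in *. lia.
    + rewrite length_map. pose proof (count_sum_map_touch o reps). lia.
    + now rewrite acc_children_length.
    + now apply acc_children_bounded.
Qed.

Lemma ideal_root_bound (reps : list entry) (ch : list tree) (c im : nat) :
  ideal (Node reps ch c im) ->
  (im <= 2 * count_sum reps + 9 * length reps * length reps)%nat.
Proof.
  intros Hid. destruct (ideal_Node reps ch c im Hid) as (Hne & Hlen & Him & Hch).
  set (m := mtot (Node reps ch c im)) in *.
  assert (Hm : m = (count_sum reps + count_sum (flat_map inorder ch))%nat)
    by (apply mtot_Node, Hlen).
  assert (Hk : (1 <= length reps)%nat) by (destruct reps; [contradiction | simpl; lia]).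
  assert (Hchildren := children_count_le (INR m / (D m + 1)) ch
    ltac:(eapply Forall_impl; [|exact Hch]; simpl; tauto)).
  rewrite Hlen, S_INR in Hchildren. unfold D in Hchildren.
  rewrite Hm, plus_INR in Hchildren.
  apply (le_INR 1) in Hk. simpl INR in Hk.
  pose proof (rebuild_size_bound (INR (count_sum reps))
    (INR (count_sum (flat_map inorder ch))) (INR (length reps))
    (pos_INR _) (pos_INR _) Hk Hchildren).
  apply INR_le. rewrite Him, Hm, !plus_INR, !mult_INR. simpl INR. lra.
Qed.

Lemma ideal_bounded (t : tree) : ideal t -> positive_counts (inorder t) -> bounded t.
Proof.
  induction t as [|reps ch c im IH] using tree_ind_nested; intros Hid Hpos; [constructor|].
  pose proof (ideal_root_bound reps ch c im Hid) as Him.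
  destruct (ideal_Node reps ch c im Hid) as (Hne & Hlen & _ & Hch).
  apply positive_counts_Node in Hpos as [Hr Hc]; auto.
  constructor; auto.
  rewrite Forall_forall in *. intros c' Hc'.
  apply IH; auto. apply Hch, Hc'.
Qed.

Lemma unmarked_positive_counts (l : list entry) :
  positive_counts l -> positive_counts (unmarked l).
Proof.
  unfold positive_counts, unmarked. rewrite !Forall_forall.
  intros Hl e He. apply filter_In in He. apply Hl, He.
Qed.

Lemma nth_bounded (j : nat) (ch : list tree) : Forall bounded ch -> bounded (nth j ch Leaf).
Proof.
  intros Hch. destruct (Nat.lt_ge_cases j (length ch)) as [Hj|Hj].
  - apply (proj1 (Forall_forall _ _) Hch), nth_In, Hj.
  - rewrite nth_overflow by exact Hj. constructor.
Qed.

Lemma replace_nth_length {A : Type} (j : nat) (a : A) (l : list A) :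
  length (replace_nth j a l) = length l.
Proof. revert j; induction l; intros [|j]; simpl; auto. Qed.

Lemma replace_nth_Forall {A : Type} (P : A -> Prop) (j : nat) (a : A) (l : list A) :
  P a -> Forall P l -> Forall P (replace_nth j a l).
Proof. revert j; induction l; intros [|j] Ha Hl; inversion Hl; simpl; auto. Qed.

Lemma bounded_step (o : op) (t t' : tree) : step o t t' -> bounded t -> bounded t'.
Proof.
  induction 1 as [|reps ch c im t' _ [Hid Hkeys]| |reps ch c im cj' _ _ _ IH];
    intros Hb.
  - now apply bounded_acc.
  - apply ideal_bounded; auto. rewrite Hkeys.
    apply unmarked_positive_counts, bounded_positive_counts, bounded_acc, Hb.
  - now apply bounded_acc.
  - inversion Hb as [|? ? ? ? Hne Hlen Hr Him Hch]; subst. constructor; auto.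
    + now rewrite replace_nth_length.
    + apply replace_nth_Forall; auto. apply IH, nth_bounded, Hch.
Qed.

Lemma reachable_bounded (t : tree) : reachable t -> bounded t.
Proof.
  induction 1 as [l t [_ Hl] [Hid Hkeys]|o t t' _ IH Hstep].
  - apply ideal_bounded; auto. rewrite Hkeys.
    eapply Forall_impl; [|exact Hl]. simpl. tauto.
  - eapply bounded_step; eauto.
Qed.

Lemma children_mem_le (alpha K : R) (cs : list tree) :
  Forall (fun c => mem alpha c <= K * INR (nkeys c)) cs ->
  fold_right (fun c s => mem alpha c + s) 0 cs <= K * INR (length (flat_map inorder cs)).
Proof.
  induction 1 as [|c cs Hc _ IH]; simpl; [lra|].
  rewrite length_app, plus_INR. unfold nkeys in Hc. lra.
Qed.

Lemma mem_bound (alpha : R) (M : nat) (t : tree) :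
  1/2 <= alpha < 1 -> bounded t -> (mtot t <= M)%nat ->
  mem alpha t <= 39 * Rpower (INR M) alpha * INR (nkeys t).
Proof.
  intros Ha. induction t as [|reps ch c im IH] using tree_ind_nested; intros Hb HM.
  { unfold nkeys; simpl. lra. }
  inversion Hb as [|? ? ? ? Hne Hlen Hr Him Hch]; subst.
  rewrite mem_Node, nkeys_Node, plus_INR by exact Hlen.
  rewrite mtot_Node in HM by exact Hlen.
  assert (Hk : (1 <= length reps)%nat) by (destruct reps; [contradiction | simpl; lia]).
  pose proof (length_le_count_sum reps Hr).
  assert (node_mem alpha im <= 39 * Rpower (INR M) alpha * INR (length reps))
    by (apply (node_mem_bound alpha im (length reps) (count_sum reps) M); auto; lia).
  assert (fold_right (fun c s => mem alpha c + s) 0 ch <=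
          39 * Rpower (INR M) alpha * INR (length (flat_map inorder ch))).
  { apply children_mem_le. rewrite Forall_forall in *. intros c' Hc'.
    apply IH; auto. pose proof (mtot_child_le c' ch Hc'). lia. }
  lra.
Qed.

Theorem theorem6 (alpha : R) (Ha : 1/2 <= alpha < 1) :
  exists C : R, 0 < C /\
    forall t : tree, reachable t ->
      mem alpha t <= C * Rpower (INR (mtot t)) alpha * INR (nkeys t).
Proof.
  exists 39. split; [lra|]. intros t Ht.
  apply mem_bound; auto. now apply reachable_bounded.
Qed.
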